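(* For every WS-HSA scheme, and every $u\in[U]$, $m\in[M]$, $n\in[N]$ with $\mathcal S_m\cap\mathcal T_n=\emptyset$ and $|(\mathcal S_m\cap\mathcal K_u)\cup\mathcal T_n|\le K-1$: (a) $H\big(\{Z_{i,j}\}_{(i,j)\in\mathcal S_m\cap\mathcal K_u}\mid\{Z_{i,j}\}_{(i,j)\in\mathcal T_n}\big)\ge|\mathcal S_m\cap\mathcal K_u|\,L$; (b) $H\big(\{Z_{i,j}\}_{(i,j)\in\mathcal K_{\mathcal U^{(m,n)}}}\mid\{Z_{i,j}\}_{(i,j)\in\mathcal T_n}\big)\ge(|\mathcal U^{(m,n)}|-1)L$ if $|\mathcal K_{\mathcal U^{(m,n)}}\cup\mathcal T_n|=K$, and $\ge|\mathcal U^{(m,n)}|\,L$ otherwise.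
   Context: Setup. Fix integers $U\ge 2$ and $V_1,\dots,V_U\ge 1$. Users are pairs $(u,v)$ with $u\in[U]$, $v\in[V_u]$; $\mathcal K_u=\{(u,v):v\in[V_u]\}$, $\mathcal K=\bigcup_u\mathcal K_u$, $K=|\mathcal K|$; for $\mathcal U\subseteq[U]$, $\mathcal K_{\mathcal U}=\bigcup_{u\in\mathcal U}\mathcal K_u$. Given are a family $\{\mathcal S_1,\dots,\mathcal S_M\}$ of subsets of $\mathcal K$ (security input sets) and a family $\{\mathcal T_1,\dots,\mathcal T_N\}$ of subsets of $\mathcal K$ (collusion sets), both closed under taking subsets. $\mathcal U^{(m,n)}=\{u\in[U]:\mathcal S_m\cap\mathcal K_u\ne\emptyset,\ \mathcal K_u\subseteq\mathcal S_m\cup\mathcal T_n\}$. A WS-HSA scheme with input length $L$ over a finite field $\mathbb F_q$ consists of jointly distributed random variables: inputs $W_{u,v}$, each uniform on $\mathbb F_q^L$; a source key $Z_\Sigma$; individual keys $Z_{u,v}$; messages $X_{u,v}$ and $Y_u$; entropies in base $q$. They satisfy: (i) $H(\{W_{u,v}\}_{\mathcal K},\{Z_{u,v}\}_{\mathcal K})=\sum_{\mathcal K}H(W_{u,v})+H(\{Z_{u,v}\}_{\mathcal K})$; (ii) $H(\{Z_{u,v}\}_{\mathcal K}\mid Z_\Sigma)=0$; (iii) $H(X_{u,v}\mid W_{u,v},Z_{u,v})=0$; (iv) $H(Y_u\mid\{X_{u,v}\}_{v\in[V_u]})=0$; (v) $H(\sum_{\mathcal K}W_{u,v}\mid Y_1,\dots,Y_U)=0$;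 (vi) $I(Y_1,\dots,Y_U;\{W_{u,v}\}_{\mathcal S_m}\mid\sum_{\mathcal K}W_{u,v},\{W_{i,j},Z_{i,j}\}_{\mathcal T_n})=0$ for all $m,n$; (vii) $I(\{X_{u,v}\}_{v\in[V_u]};\{W_{i,j}\}_{\mathcal S_m}\mid\{W_{i,j},Z_{i,j}\}_{\mathcal T_n})=0$ for all $u,m,n$. *)

From HB Require Import structures.
From mathcomp Require Import all_boot all_order all_algebra.
From mathcomp Require Import reals exp.
Set Implicit Arguments. Unset Strict Implicit. Unset Printing Implicit Defensive.
Import Order.TTheory GRing.Theory Num.Theory.
Local Open Scope ring_scope.

Definition is_prob (R : realType) (Omega : finType) (P : Omega -> R) :=
  (forall w, 0 <= P w) /\ \sum_(w : Omega) P w = 1.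

Definition prob_eq (R : realType) (Omega : finType) (P : Omega -> R)
  (T : finType) (X : Omega -> T) (t : T) : R :=
  \sum_(w : Omega | X w == t) P w.

(* Shannon entropy in base b (0 log 0 = 0 since the term is multiplied by 0). *)
Definition entropy (R : realType) (b : R) (Omega : finType) (P : Omega -> R)
  (T : finType) (X : Omega -> T) : R :=
  - \sum_(t : T) prob_eq P X t * (ln (prob_eq P X t) / ln b).

Definition jointRV (Omega T1 T2 : Type) (X1 : Omega -> T1) (X2 : Omega -> T2) :
  Omega -> T1 * T2 := fun w => (X1 w, X2 w).

Definition coll (Omega : Type) (I : finType) (T : Type) (A : {set I})
  (f : I -> Omega -> T) : Omega -> {ffun I -> option T} :=
  fun w => [ffun i => if i \in A then Some (f i w) else None].

Definition centropy (R : realType) (b : R) (Omega : finType) (P : Omega -> R)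
  (T1 T2 : finType) (X : Omega -> T1) (Y : Omega -> T2) : R :=
  entropy b P (jointRV X Y) - entropy b P Y.

Definition cmutinfo (R : realType) (b : R) (Omega : finType) (P : Omega -> R)
  (T1 T2 T3 : finType) (X : Omega -> T1) (Y : Omega -> T2) (Z : Omega -> T3) : R :=
  centropy b P X Z - centropy b P X (jointRV Y Z).

Definition user (U : nat) (V : 'I_U -> nat) : finType :=
  {u : 'I_U & 'I_(V u)}.

Definition Kset (U : nat) (V : 'I_U -> nat) (u : 'I_U) : {set user V} :=
  [set k : user V | tag k == u].

Definition Uset (U : nat) (V : 'I_U -> nat) (Sm Tn : {set user V}) : {set 'I_U} :=
  [set u : 'I_U | (Sm :&: Kset V u != set0) && (Kset V u \subset Sm :|: Tn)].

Definition KUset (U : nat) (V : 'I_U -> nat) (Us : {set 'I_U}) : {set user V} :=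
  \bigcup_(u in Us) Kset V u.

Definition subset_closed (I : finType) (M : nat) (S : 'I_M -> {set I}) :=
  forall m (A : {set I}), A \subset S m -> exists m', S m' = A.

(* WS-HSA scheme conditions (i)-(vii), entropies in base q = #|F|. *)
Definition WS_HSA (R : realType) (Omega : finType) (P : Omega -> R)
  (F : finFieldType) (L U : nat) (V : 'I_U -> nat)
  (M N : nat) (S : 'I_M -> {set user V}) (T : 'I_N -> {set user V})
  (TZS TZ TX TY : finType)
  (W : user V -> Omega -> 'rV[F]_L) (ZS : Omega -> TZS)
  (Z : user V -> Omega -> TZ) (X : user V -> Omega -> TX)
  (Y : 'I_U -> Omega -> TY) : Prop :=
  let q : R := #|F|%:R in
  let H := @entropy R q Omega P in
  let CH := @centropy R q Omega P in
  let MI := @cmutinfo R q Omega P in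
  let Wsum := fun w => \sum_(k : user V) W k w in
  is_prob P /\
      (forall k x, prob_eq P (W k) x = ((#|F| ^ L)%N%:R)^-1) /\
      H _ (jointRV (coll setT W) (coll setT Z)) =
        \sum_(k : user V) H _ (W k) + H _ (coll setT Z) /\
      CH _ _ (coll setT Z) ZS = 0 /\
      (forall k, CH _ _ (X k) (jointRV (W k) (Z k)) = 0) /\
      (forall u, CH _ _ (Y u) (coll (Kset V u) X) = 0) /\
      CH _ _ Wsum (coll setT Y) = 0 /\
      (forall m n, MI _ _ _ (coll setT Y) (coll (S m) W)
          (jointRV Wsum (jointRV (coll (T n) W) (coll (T n) Z))) = 0) /\
      (forall u m n, MI _ _ _ (coll (Kset V u) X) (coll (S m) W)
          (jointRV (coll (T n) W) (coll (T n) Z)) = 0).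

From HB Require Import structures.
From mathcomp Require Import all_boot all_order all_algebra.
From mathcomp Require Import reals exp.
From mathcomp.algebra_tactics Require Import ring lra.
Set Implicit Arguments. Unset Strict Implicit. Unset Printing Implicit Defensive.
Import Order.TTheory GRing.Theory Num.Theory.
Local Open Scope ring_scope.

(* All entropy inequalities below are instances of one submodularity inequality
   [H(A) + H(D) <= H(B) + H(C)], for [B], [C] functions of [A] determining it and [D] a
   function of both, which follows from [ln x <= x - 1].
   By (i) and uniformity, an input [W a] keeps [L] units of entropy given the other
   inputs and all the other keys ("the rest").  By (iii)-(v) a message of user [a]
   together with the rest determines [W a], so it too has [L] units given the rest;
   chaining over the users yields [|A| L] for the relay messages [X] of
   [A = S_m :&: K_u], and [|U^(m,n)| L] for the server messages [Y], given the
   colluders' view.  The security conditions (vii), resp. (vi), allow one to condition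
   on the inputs [W_A] as well, and then the messages are functions of the keys, which
   therefore carry at least as much entropy.  In (b) security holds only given the sum
   of the inputs, which costs at most [L]; it costs nothing when an input outside
   [K_U :|: T_n] masks the sum. *)

Definition determined_by (Omega T1 T2 : Type) (X : Omega -> T1) (Y : Omega -> T2) :=
  forall w w', Y w = Y w' -> X w = X w'.

Ltac solve_determined :=
  let w := fresh "w" in let w' := fresh "w'" in let e := fresh "e" in
  intros w w' e; rewrite /jointRV in e *; injection e; intros; congruence.

Lemma setD1_ind (I : finType) (Q : {set I} -> Prop) :
  Q set0 -> (forall (A : {set I}) a, a \in A -> Q (A :\ a) -> Q A) -> forall A, Q A.
Proof.
move=> Q0 QD1 A; move: {2}#|A| (erefl #|A|) => n; elim: n A => [|n IH] A cardA.
  by move/eqP: cardA; rewrite cards_eq0 => /eqP ->.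
have [a aA] : exists a, a \in A by apply/set0Pn; rewrite -card_gt0 cardA.
by apply: (QD1 _ a aA); apply: IH; move: cardA; rewrite (cardsD1 a) aA => -[].
Qed.

Section Determined.
Variable Omega : Type.

Lemma determined_refl T (X : Omega -> T) : determined_by X X.
Proof. by move=> ? ? ->. Qed.

Lemma determined_trans T1 T2 T3 (X : Omega -> T1) (Y : Omega -> T2) (Z : Omega -> T3) :
  determined_by X Y -> determined_by Y Z -> determined_by X Z.
Proof. by move=> dXY dYZ w w' /dYZ /dXY. Qed.

Lemma determined_fst T1 T2 (X : Omega -> T1) (Y : Omega -> T2) :
  determined_by X (jointRV X Y).
Proof. by move=> w w' [->]. Qed.

Lemma determined_snd T1 T2 (X : Omega -> T1) (Y : Omega -> T2) :
  determined_by Y (jointRV X Y).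
Proof. by move=> w w' [_ ->]. Qed.

Lemma determined_fstW T1 T2 T3 (X : Omega -> T1) (Y : Omega -> T2) (Z : Omega -> T3) :
  determined_by X Y -> determined_by X (jointRV Y Z).
Proof. by move=> dXY w w' [/dXY]. Qed.

Lemma determined_sndW T1 T2 T3 (X : Omega -> T1) (Y : Omega -> T2) (Z : Omega -> T3) :
  determined_by X Z -> determined_by X (jointRV Y Z).
Proof. by move=> dXZ w w' [_ /dXZ]. Qed.

Lemma determined_pair T1 T2 T3 (X : Omega -> T1) (Y : Omega -> T2) (Z : Omega -> T3) :
  determined_by X Z -> determined_by Y Z -> determined_by (jointRV X Y) Z.
Proof. by move=> dX dY w w' e; rewrite /jointRV (dX _ _ e) (dY _ _ e). Qed.

Lemma determined_const T1 T2 (X : Omega -> T1) (Y : Omega -> T2) :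
  (forall w w', X w = X w') -> determined_by X Y.
Proof. by move=> cX w w' _. Qed.

Variables (I : finType) (T : Type).
Implicit Types (A B : {set I}) (f : I -> Omega -> T).

Lemma eq_coll_mem A f w w' :
  coll A f w = coll A f w' -> forall i, i \in A -> f i w = f i w'.
Proof. by move=> /ffunP e i iA; move: (e i); rewrite !ffunE iA => -[]. Qed.

Lemma determined_coll_mem A f i : i \in A -> determined_by (f i) (coll A f).
Proof. by move=> iA w w' /eq_coll_mem; apply. Qed.

Lemma determined_coll T2 A f (Y : Omega -> T2) :
  (forall i, i \in A -> determined_by (f i) Y) -> determined_by (coll A f) Y.
Proof.
move=> dA w w' e; apply/ffunP => i; rewrite !ffunE.
by case: ifP => // iA; rewrite (dA i iA _ _ e).
Qed.

Lemma determined_collS A B f : A \subset B -> determined_by (coll A f) (coll B f).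
Proof.
by move=> /subsetP sAB; apply: determined_coll => i /sAB; apply: determined_coll_mem.
Qed.

Lemma coll0_const f w w' : coll set0 f w = coll set0 f w'.
Proof. by apply/ffunP => i; rewrite !ffunE inE. Qed.

Lemma determined_coll_setD1 A f a :
  a \in A -> determined_by (coll A f) (jointRV (f a) (coll (A :\ a) f)).
Proof.
move=> aA; apply: determined_coll => i iA.
have [->|ia] := eqVneq i a; first exact: determined_fst.
apply: (determined_trans (Y := coll (A :\ a) f)); last exact: determined_snd.
by apply: determined_coll_mem; rewrite !inE ia.
Qed.

Lemma determined_setD1_coll A f a :
  a \in A -> determined_by (jointRV (f a) (coll (A :\ a) f)) (coll A f).
Proof.
move=> aA; apply: determined_pair; first exact: determined_coll_mem.
exact/determined_collS/subD1set.
Qed.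

Lemma determined_coll_setC1 f a :
  determined_by (coll setT f) (jointRV (f a) (coll (~: [set a]) f)).
Proof. by rewrite -setTD; apply: determined_coll_setD1; rewrite inE. Qed.

End Determined.

Arguments determined_refl {Omega T} X.
Arguments determined_fst {Omega T1 T2} X Y.
Arguments determined_snd {Omega T1 T2} X Y.

Lemma ln_le_subr1 (R : realType) (x : R) : 0 < x -> ln x <= x - 1.
Proof. by move=> x_gt0; have := @le_ln1Dx _ (x - 1); rewrite addrCA subrr addr0; apply; lra. Qed.

Section Entropy.
Variables (R : realType) (Omega : finType) (P : Omega -> R) (q : R).
Hypotheses (P_prob : is_prob P) (q_gt1 : 1 < q).
Local Notation h := (entropy q P).

Definition pmass (T : finType) (X : Omega -> T) w := prob_eq P X (X w).

Lemma P_ge0 w : 0 <= P w. Proof. by case: P_prob. Qed.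

Lemma sum_P : \sum_w P w = 1. Proof. by case: P_prob. Qed.

Lemma ln_q_gt0 : 0 < ln q. Proof. exact: ln_gt0. Qed.

Lemma sum_fibers (T : finType) (X : Omega -> T) (f : T -> R) :
  \sum_w P w * f (X w) = \sum_t prob_eq P X t * f t.
Proof.
rewrite (partition_big X xpredT) //=; apply: eq_bigr => t _.
by rewrite /prob_eq mulr_suml; apply: eq_big => // w /eqP ->.
Qed.

Lemma sum_prob_eq (T : finType) (X : Omega -> T) : \sum_t prob_eq P X t = 1.
Proof.
by rewrite /prob_eq -sum_P (partition_big X xpredT).
Qed.

Lemma prob_eq_ge0 (T : finType) (X : Omega -> T) t : 0 <= prob_eq P X t.
Proof. by apply: sumr_ge0 => w _; apply: P_ge0. Qed.

Lemma pmassE (T : finType) (X : Omega -> T) w :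
  pmass X w = \sum_w1 (X w1 == X w)%:R * P w1.
Proof.
rewrite /pmass /prob_eq big_mkcond; apply: eq_bigr => w1 _.
by case: eqP; rewrite ?mul1r ?mul0r.
Qed.

Lemma pmass_ge_P (T : finType) (X : Omega -> T) w : P w <= pmass X w.
Proof. by rewrite /pmass /prob_eq (bigD1 w) //= lerDl sumr_ge0 // => *; apply: P_ge0. Qed.

Lemma pmass_ge0 (T : finType) (X : Omega -> T) w : 0 <= pmass X w.
Proof. exact: le_trans (P_ge0 w) (pmass_ge_P X w). Qed.

Lemma le_pmass_determined (T1 T2 : finType) (X : Omega -> T1) (Y : Omega -> T2) w :
  determined_by X Y -> pmass Y w <= pmass X w.
Proof.
move=> dXY; rewrite !pmassE; apply: ler_sum => w1 _.
have [/dXY ->|_] := eqVneq (Y w1) (Y w); first by rewrite eqxx.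
by rewrite mul0r mulr_ge0 ?ler0n ?P_ge0.
Qed.

Lemma entropyE (T : finType) (X : Omega -> T) :
  h X = - (\sum_w P w * ln (pmass X w)) / ln q.
Proof.
rewrite /entropy /pmass (sum_fibers X (fun t => ln (prob_eq P X t))).
by rewrite mulNr mulr_suml; congr (- _); apply: eq_bigr => t _; rewrite mulrA.
Qed.

Lemma le_entropy_determined (T1 T2 : finType) (X : Omega -> T1) (Y : Omega -> T2) :
  determined_by X Y -> h X <= h Y.
Proof.
move=> dXY; rewrite !entropyE !mulNr lerN2 ler_pM2r ?invr_gt0 ?ln_q_gt0 //.
apply: ler_sum => w _; have [Pw0|Pw_gt0] := eqVneq (P w) 0; first by rewrite Pw0 !mul0r.
have {}Pw_gt0 : 0 < P w by rewrite lt0r Pw_gt0 P_ge0.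
have pY := lt_le_trans Pw_gt0 (pmass_ge_P Y w).
rewrite ler_wpM2l ?P_ge0 // ler_ln ?posrE ?le_pmass_determined //.
exact: lt_le_trans pY (le_pmass_determined w dXY).
Qed.

Lemma eq_entropy_determined (T1 T2 : finType) (X : Omega -> T1) (Y : Omega -> T2) :
  determined_by X Y -> determined_by Y X -> h X = h Y.
Proof. by move=> ? ?; apply/eqP; rewrite eq_le !le_entropy_determined. Qed.

Lemma entropy_const (T : finType) (X : Omega -> T) :
  (forall w w', X w = X w') -> h X = 0.
Proof.
move=> cX; rewrite entropyE big1 ?oppr0 ?mul0r // => w _.
rewrite /pmass /prob_eq (eq_bigl xpredT) ?sum_P ?ln1 ?mulr0 // => w'.
by rewrite (cX w' w) eqxx.
Qed.

Lemma card_codom_gt0 (T : finType) (X : Omega -> T) : (0 < #|T|)%N.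
Proof.
have [w _|none] := pickP (fun _ : Omega => true); first by apply/card_gt0P; exists (X w).
by move: sum_P; rewrite big_pred0 // => /eqP; rewrite eq_sym oner_eq0.
Qed.

Lemma entropy_le_ln_card (T : finType) (X : Omega -> T) : h X <= ln #|T|%:R / ln q.
Proof.
have N_gt0 : 0 < (#|T|%:R : R) by rewrite ltr0n (card_codom_gt0 X).
set N := (#|T|%:R : R) in N_gt0 *.
rewrite /entropy; under eq_bigr do rewrite mulrA.
rewrite -mulr_suml -mulNr ler_pM2r ?invr_gt0 ?ln_q_gt0 //.
(* [- p ln p - p ln N = p ln (1 / (N p)) <= 1 / N - p], summed over the [#|T|] values. *)
have key : \sum_t (- (prob_eq P X t * ln (prob_eq P X t)) - prob_eq P X t * ln N)
    <= \sum_t (N^-1 - prob_eq P X t).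
  apply: ler_sum => t _; set p := prob_eq P X t; have [->|p_neq0] := eqVneq p 0.
    by rewrite !mul0r !subr0 oppr0 invr_ge0 ltW.
  have p_gt0 : 0 < p by rewrite lt0r p_neq0 prob_eq_ge0.
  have -> : - (p * ln p) - p * ln N = p * ln ((N * p)^-1).
    by rewrite lnV ?posrE ?mulr_gt0 // lnM ?posrE //; ring.
  have -> : N^-1 - p = p * ((N * p)^-1 - 1) by field; rewrite !gt_eqF.
  by rewrite ler_wpM2l ?ln_le_subr1 ?invr_gt0 ?mulr_gt0 // ltW.
move: key; rewrite !sumrB sumr_const -mulr_suml sum_prob_eq mul1r -mulr_natr mulVf ?gt_eqF // sumrN.
lra.
Qed.

Lemma entropy_uniform (T : finType) (X : Omega -> T) :
  (forall t, prob_eq P X t = #|T|%:R^-1) -> h X = ln #|T|%:R / ln q.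
Proof.
move=> X_unif; have N_gt0 : 0 < (#|T|%:R : R) by rewrite ltr0n (card_codom_gt0 X).
rewrite /entropy; under eq_bigr do rewrite X_unif.
rewrite sumr_const -mulr_natr lnV ?posrE ?mul1r //.
by have := ln_q_gt0 => lnq_gt0; field; rewrite !gt_eqF.
Qed.

Section Submodularity.
Variables (TA TB TC TD : finType) (A : Omega -> TA) (B : Omega -> TB)
  (C : Omega -> TC) (D : Omega -> TD).
Hypotheses (dBA : determined_by B A) (dCA : determined_by C A)
  (dABC : determined_by A (jointRV B C))
  (dDB : determined_by D B) (dDC : determined_by D C).

Let ratio w := pmass B w * pmass C w / (pmass A w * pmass D w).

Lemma sum_fiber_weights w1 w2 :
  \sum_w (B w1 == B w)%:R * (C w2 == C w)%:R * (P w / (pmass A w * pmass D w))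
  <= (D w2 == D w1)%:R / pmass D w1.
Proof.
have [w0 /andP[/eqP Bw0 /eqP Cw0] | none] :=
  pickP (fun w => (B w1 == B w) && (C w2 == C w)); last first.
  rewrite big1 => [|w _]; first by rewrite mulr_ge0 ?invr_ge0 ?pmass_ge0.
  by move: (none w) => /=; case: (B w1 == B w); case: (C w2 == C w); rewrite ?(mul0r, mulr0).
have D21 : D w2 = D w1 by rewrite (dDC Cw0) (dDB Bw0).
rewrite D21 eqxx mul1r.
(* On the fiber of (B, C) through w0, A is constant and equal to A w0. *)
have -> : \sum_w (B w1 == B w)%:R * (C w2 == C w)%:R * (P w / (pmass A w * pmass D w))
    = (\sum_w (A w == A w0)%:R * P w) / (pmass A w0 * pmass D w1).
  rewrite mulr_suml /=; apply: eq_bigr => w _.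
  have [Aw|nAw] := eqVneq (A w) (A w0).
    rewrite (dBA Aw) (dCA Aw) -Bw0 -Cw0 !eqxx /pmass Aw (dDB (etrans (dBA Aw) (esym Bw0))).
    by rewrite !mul1r.
  rewrite !mul0r.
  have [Bw|_] := eqVneq (B w1) (B w); last by rewrite !mul0r.
  have [Cw|_] := eqVneq (C w2) (C w); last by rewrite mulr0 mul0r.
  by case/eqP: nAw; apply: dABC; rewrite /jointRV -Bw -Cw Bw0 Cw0.
rewrite -pmassE invfM mulrA.
have [->|nz] := eqVneq (pmass A w0) 0; first by rewrite !mul0r invr_ge0 pmass_ge0.
by rewrite mulfV // mul1r.
Qed.

Lemma sum_ratio_le1 : \sum_w P w * ratio w <= 1.
Proof.
have expand w : P w * ratio w = \sum_w1 \sum_w2 (P w1 * P w2) *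
    ((B w1 == B w)%:R * (C w2 == C w)%:R * (P w / (pmass A w * pmass D w))).
  have -> : P w * ratio w = pmass B w * (pmass C w * (P w / (pmass A w * pmass D w))).
    by rewrite /ratio; ring.
  rewrite (pmassE B) mulr_suml /=; apply: eq_bigr => w1 _.
  rewrite (pmassE C) mulr_suml mulr_sumr /=; apply: eq_bigr => w2 _; ring.
under eq_bigr do rewrite expand.
rewrite exchange_big; under eq_bigr do rewrite exchange_big /=.
apply: le_trans (_ : \sum_w1 \sum_w2 P w1 * P w2 * ((D w2 == D w1)%:R / pmass D w1) <= 1).
  apply: ler_sum => w1 _; apply: ler_sum => w2 _; rewrite -mulr_sumr /=.
  by rewrite ler_wpM2l ?mulr_ge0 ?P_ge0 ?sum_fiber_weights.
rewrite -[leRHS]sum_P; apply: ler_sum => w1 _.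
have -> : \sum_w2 P w1 * P w2 * ((D w2 == D w1)%:R / pmass D w1)
    = P w1 / pmass D w1 * \sum_w2 (D w2 == D w1)%:R * P w2.
  by rewrite mulr_sumr; apply: eq_bigr => w2 _; ring.
rewrite -pmassE.
have [->|nz] := eqVneq (pmass D w1) 0; first by rewrite mulr0 P_ge0.
by rewrite divfK.
Qed.

(* Gibbs: [ln r <= r - 1] pointwise, and the [r]-weighted total mass is at most 1. *)
Lemma entropy_submod : h A + h D <= h B + h C.
Proof.
have key : \sum_w P w * (ln (pmass B w) + ln (pmass C w) - ln (pmass A w) - ln (pmass D w))
    <= 0.
  apply: le_trans (_ : \sum_w (P w * ratio w - P w) <= 0); last first.
    by rewrite sumrB sum_P subr_le0 sum_ratio_le1.
  apply: ler_sum => w _; have [Pw0|Pw_gt0] := eqVneq (P w) 0.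
    by rewrite Pw0 !mul0r subr0.
  have {}Pw_gt0 : 0 < P w by rewrite lt0r Pw_gt0 P_ge0.
  have pmass_gt0 (T : finType) (X : Omega -> T) : 0 < pmass X w.
    exact: lt_le_trans Pw_gt0 (pmass_ge_P X w).
  have -> : ln (pmass B w) + ln (pmass C w) - ln (pmass A w) - ln (pmass D w) = ln (ratio w).
    by rewrite ln_div ?lnM ?posrE ?mulr_gt0 ?pmass_gt0 //; ring.
  have -> : P w * ratio w - P w = P w * (ratio w - 1) by ring.
  by rewrite ler_wpM2l ?P_ge0 // ln_le_subr1 // divr_gt0 ?mulr_gt0 ?pmass_gt0.
rewrite !entropyE -subr_le0.
set sA := \sum_w _ * ln (pmass A w); set sB := \sum_w _ * ln (pmass B w).
set sC := \sum_w _ * ln (pmass C w); set sD := \sum_w _ * ln (pmass D w).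
have -> : - sA / ln q + - sD / ln q - (- sB / ln q + - sC / ln q)
    = (sB + sC - sA - sD) / ln q by ring.
rewrite pmulr_lle0 ?invr_gt0 ?ln_q_gt0 //.
by move: key; under eq_bigr do rewrite !mulrDr !mulrN; rewrite !big_split /= !sumrN.
Qed.

End Submodularity.
End Entropy.

Section Shannon.
Variables (R : realType) (Omega : finType) (P : Omega -> R) (q : R).
Hypotheses (P_prob : is_prob P) (q_gt1 : 1 < q).
Local Notation h := (entropy q P).
Local Notation ch := (centropy q P).
Local Notation cmi := (cmutinfo q P).
Local Notation submod A B C D := (@entropy_submod _ _ _ _ P_prob q_gt1 _ _ _ _ A B C D).
Local Notation entropy_det_le := (le_entropy_determined P_prob q_gt1).
Local Notation entropy_det_eq := (eq_entropy_determined P_prob q_gt1).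

Lemma entropy_pair_le (T1 T2 : finType) (X : Omega -> T1) (Y : Omega -> T2) :
  h (jointRV X Y) <= h X + h Y.
Proof.
have := submod (jointRV X Y) X Y (fun _ => tt).
rewrite [h (fun _ => tt)](entropy_const q P_prob) // addr0; apply; try exact: determined_const.
- exact: determined_fst.
- exact: determined_snd.
- exact: determined_refl.
Qed.

Lemma centropy_ge0 (T1 T2 : finType) (X : Omega -> T1) (Y : Omega -> T2) : 0 <= ch X Y.
Proof. by rewrite subr_ge0 entropy_det_le //; apply: determined_snd. Qed.

Lemma centropy_le_entropy (T1 T2 : finType) (X : Omega -> T1) (Y : Omega -> T2) :
  ch X Y <= h X.
Proof. by rewrite /centropy lerBlDr entropy_pair_le. Qed.

Lemma centropy_determined (T1 T2 : finType) (X : Omega -> T1) (Y : Omega -> T2) :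
  determined_by X Y -> ch X Y = 0.
Proof.
move=> dXY; rewrite /centropy (entropy_det_eq (Y := Y)) ?subrr //; last exact: determined_snd.
exact/determined_pair/determined_refl.
Qed.

Lemma le_centropy_cond (T1 T2 T3 : finType) (X : Omega -> T1) (Y : Omega -> T2)
    (Y' : Omega -> T3) :
  determined_by Y Y' -> ch X Y' <= ch X Y.
Proof.
move=> dY; rewrite /centropy.
have : h (jointRV X Y') + h Y <= h (jointRV X Y) + h Y'.
  apply: (submod (jointRV X Y') (jointRV X Y) Y' Y); try solve_determined.
  - by move=> w w' [eX eY]; rewrite /jointRV eX (dY _ _ eY).
  - exact: dY.
lra.
Qed.

Lemma eq_centropy (T1 T2 T3 T4 : finType) (X : Omega -> T1) (X' : Omega -> T2)
    (Y : Omega -> T3) (Y' : Omega -> T4) :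
  determined_by X X' -> determined_by X' X -> determined_by Y Y' -> determined_by Y' Y ->
  ch X Y = ch X' Y'.
Proof.
move=> dXX' dX'X dYY' dY'Y; rewrite /centropy (entropy_det_eq dYY' dY'Y).
by congr (_ - _); apply: entropy_det_eq; apply: determined_pair;
  by [apply: determined_fstW | apply: determined_sndW].
Qed.

Lemma centropy_collD1 (I T1 T2 : finType) (A : {set I}) (f : I -> Omega -> T1)
    (Y : Omega -> T2) a :
  a \in A -> ch (coll A f) Y = ch (jointRV (f a) (coll (A :\ a) f)) Y.
Proof.
move=> aA; apply: eq_centropy; try exact: determined_refl.
- exact: determined_coll_setD1.
- exact: determined_setD1_coll.
Qed.

Lemma centropy_chain (T1 T2 T3 : finType) (X : Omega -> T1) (Y : Omega -> T2)
    (Z : Omega -> T3) :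
  ch (jointRV X Y) Z = ch X (jointRV Y Z) + ch Y Z.
Proof.
rewrite /centropy (entropy_det_eq (Y := jointRV X (jointRV Y Z))); try solve_determined.
lra.
Qed.

Lemma centropy_le_centropy0 (T1 T2 T3 : finType) (X : Omega -> T1) (G : Omega -> T2)
    (Y : Omega -> T3) :
  ch G Y = 0 -> ch X Y <= ch X G.
Proof.
move=> chGY0; have := le_centropy_cond X (determined_fst G Y).
have : h (jointRV X Y) <= h (jointRV X (jointRV G Y)) by apply: entropy_det_le; solve_determined.
rewrite /centropy in chGY0 *; lra.
Qed.

Lemma centropy_le_recover (T1 T2 T3 : finType) (X : Omega -> T1) (G : Omega -> T2)
    (Y : Omega -> T3) :
  ch X (jointRV G Y) = 0 -> ch X Y <= ch G Y.
Proof.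
have : h (jointRV X Y) <= h (jointRV X (jointRV G Y)) by apply: entropy_det_le; solve_determined.
rewrite /centropy; lra.
Qed.

Lemma centropy0_cond (T1 T2 T3 : finType) (X : Omega -> T1) (Y : Omega -> T2)
    (Y' : Omega -> T3) :
  ch X Y = 0 -> determined_by Y Y' -> ch X Y' = 0.
Proof.
by move=> chXY0 dY; apply/eqP; rewrite eq_le centropy_ge0 andbT -chXY0 le_centropy_cond.
Qed.

Lemma centropy0_pair (T1 T2 T3 : finType) (X1 : Omega -> T1) (X2 : Omega -> T2)
    (Y : Omega -> T3) :
  ch X1 Y = 0 -> ch X2 Y = 0 -> ch (jointRV X1 X2) Y = 0.
Proof.
move=> chX1 chX2; apply/eqP; rewrite eq_le centropy_ge0 andbT.
have : h (jointRV (jointRV X1 X2) Y) + h Y <= h (jointRV X1 Y) + h (jointRV X2 Y).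
  by apply: (submod _ _ _ _); solve_determined.
move: chX1 chX2; rewrite /centropy; lra.
Qed.

Lemma centropy0_trans (T1 T2 T3 : finType) (X : Omega -> T1) (Y : Omega -> T2)
    (Y' : Omega -> T3) :
  ch X Y = 0 -> ch Y Y' = 0 -> ch X Y' = 0.
Proof.
move=> chXY chYY'; apply/eqP; rewrite eq_le centropy_ge0 andbT.
have : h (jointRV X (jointRV Y Y')) + h Y <= h (jointRV X Y) + h (jointRV Y Y').
  by apply: (submod _ _ _ _); solve_determined.
have : h (jointRV X Y') <= h (jointRV X (jointRV Y Y')) by apply: entropy_det_le; solve_determined.
move: chXY chYY'; rewrite /centropy; lra.
Qed.

Lemma centropy0_coll (I T1 T2 : finType) (A : {set I}) (f : I -> Omega -> T1)
    (Y : Omega -> T2) :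
  (forall i, i \in A -> ch (f i) Y = 0) -> ch (coll A f) Y = 0.
Proof.
elim/setD1_ind: A => [_|A a aA IH chAY].
  exact/centropy_determined/determined_const/coll0_const.
rewrite (centropy_collD1 _ _ aA).
apply: centropy0_pair; first exact: chAY.
by apply: IH => i /setD1P[_ /chAY].
Qed.

Lemma entropy_coll_le (I T1 T2 : finType) (A : {set I}) (f : I -> Omega -> T1)
    (Y : Omega -> T2) :
  h (jointRV (coll A f) Y) <= \sum_(i in A) h (f i) + h Y.
Proof.
elim/setD1_ind: A => [|A a aA IH].
  rewrite big_set0 add0r (entropy_det_eq (Y := Y)) //; last exact: determined_snd.
  exact/determined_pair/determined_refl/determined_const/coll0_const.
rewrite (big_setD1 a aA) /= -addrA.
rewrite (entropy_det_eq (Y := jointRV (f a) (jointRV (coll (A :\ a) f) Y))); last 2 first.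
- apply: determined_pair; last by solve_determined.
  by apply: determined_trans (determined_coll_setD1 (f := f) aA) _; solve_determined.
- apply: determined_pair; first exact/determined_fstW/determined_coll_mem.
  apply: determined_pair; last exact: determined_snd.
  exact/determined_fstW/determined_collS/subD1set.
by apply: le_trans (entropy_pair_le _ _) _; rewrite lerD2l.
Qed.

Lemma centropy_coll_ge (I T1 T2 : finType) (B : {set I}) (f : I -> Omega -> T1)
    (C : Omega -> T2) (lb : R) :
  (forall a (B' : {set I}), a \in B -> a \notin B' -> lb <= ch (f a) (jointRV (coll B' f) C)) ->
  #|B|%:R * lb <= ch (coll B f) C.
Proof.
move=> step; suff : forall B0 : {set I}, B0 \subset B -> #|B0|%:R * lb <= ch (coll B0 f) C by apply.
elim/setD1_ind => [_|B0 a aB0 IH sB0B].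
  by rewrite cards0 mul0r centropy_determined //; apply/determined_const/coll0_const.
rewrite (centropy_collD1 _ _ aB0) centropy_chain (cardsD1 a) aB0 natrD mulrDl mul1r.
apply: lerD; first by apply: step; [exact: subsetP sB0B a aB0 | rewrite !inE eqxx].
exact/IH/(subset_trans (subD1set B0 a) sB0B).
Qed.

Lemma le_cmutinfo_determined (T1 T2 T3 T4 : finType) (X : Omega -> T1) (X' : Omega -> T2)
    (Y : Omega -> T3) (Z : Omega -> T4) :
  determined_by X X' -> cmi X Y Z <= cmi X' Y Z.
Proof.
move=> dX; rewrite /cmutinfo /centropy.
have : h (jointRV X' (jointRV Y Z)) + h (jointRV X Z)
    <= h (jointRV X' Z) + h (jointRV X (jointRV Y Z)).
  apply: (submod _ _ _ _); try solve_determined.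
  - by move=> w w' [/dX eX eY eZ]; rewrite /jointRV eX eY eZ.
  - by move=> w w' [/dX eX eZ]; rewrite /jointRV eX eZ.
lra.
Qed.

Lemma cmutinfo_chain_le (T1 T2 T3 T4 : finType) (X1 : Omega -> T1) (X : Omega -> T2)
    (Y : Omega -> T3) (Z : Omega -> T4) :
  cmi X Y Z <= cmi X1 Y Z + cmi X Y (jointRV X1 Z).
Proof.
apply: le_trans (le_cmutinfo_determined Y Z (determined_snd X1 X)) _.
rewrite /cmutinfo /centropy.
rewrite (entropy_det_eq (X := jointRV (jointRV X1 X) Z) (Y := jointRV X (jointRV X1 Z)));
  try solve_determined.
rewrite (entropy_det_eq (X := jointRV (jointRV X1 X) (jointRV Y Z))
  (Y := jointRV X (jointRV Y (jointRV X1 Z)))); try solve_determined.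
rewrite (entropy_det_eq (X := jointRV X1 (jointRV Y Z)) (Y := jointRV Y (jointRV X1 Z)));
  try solve_determined.
lra.
Qed.

Lemma cmutinfo_le_centropy (T1 T2 T3 : finType) (X : Omega -> T1) (G : Omega -> T2)
    (Y : Omega -> T3) :
  cmi X G Y <= ch G Y.
Proof.
have : h (jointRV X Y) <= h (jointRV X (jointRV G Y)) by apply: entropy_det_le; solve_determined.
rewrite /cmutinfo /centropy; lra.
Qed.
End Shannon.

Lemma Uset_witness (U : nat) (V : 'I_U -> nat) (Sm Tn : {set user V}) :
  Sm :&: Tn = set0 -> forall u, u \in Uset Sm Tn -> exists2 a, a \notin Tn & tag a = u.
Proof.
move=> disjST u; rewrite inE => /andP[/set0Pn[a]]; rewrite !inE => /andP[aS /eqP <-] _.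
exists a => //; apply/negP => aT.
have : a \in Sm :&: Tn by rewrite inE aS aT.
by rewrite disjST inE.
Qed.

Lemma KUset_Uset_sub (U : nat) (V : 'I_U -> nat) (Sm Tn : {set user V}) :
  KUset V (Uset Sm Tn) \subset (Sm :&: KUset V (Uset Sm Tn)) :|: Tn.
Proof.
apply/subsetP => k kKU; have /bigcupP[u] := kKU; rewrite inE => /andP[_ /subsetP KuST] kKu.
by move: (KuST k kKu); rewrite !inE kKU andbT.
Qed.

Section Bounds.
Variables (R : realType) (Omega : finType) (P : Omega -> R) (F : finFieldType)
  (L U : nat) (V : 'I_U -> nat) (M N : nat)
  (S : 'I_M -> {set user V}) (T : 'I_N -> {set user V}) (TZS TZ TX TY : finType)
  (W : user V -> Omega -> 'rV[F]_L) (ZS : Omega -> TZS) (Z : user V -> Omega -> TZ)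
  (X : user V -> Omega -> TX) (Y : 'I_U -> Omega -> TY).
Hypothesis scheme : WS_HSA P S T W ZS Z X Y.

Let q : R := #|F|%:R.
Local Notation h := (entropy q P).
Local Notation ch := (centropy q P).
Local Notation cmi := (cmutinfo q P).
Local Notation Wsum := (fun w => \sum_(k : user V) W k w).
Local Notation others a := (jointRV (coll (~: [set a]) W) (coll (~: [set a]) Z)).
Local Notation collusion Tn := (jointRV (coll Tn W) (coll Tn Z)).

Let P_prob : is_prob P. Proof. by case: scheme. Qed.
Let W_uniform k x : prob_eq P (W k) x = ((#|F| ^ L)%N%:R)^-1.
Proof. by case: scheme => _ []. Qed.
Let WZ_indep :
  h (jointRV (coll setT W) (coll setT Z)) = \sum_(k : user V) h (W k) + h (coll setT Z).
Proof. by case: scheme => _ [_ []]. Qed.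
Let X_of_WZ k : ch (X k) (jointRV (W k) (Z k)) = 0.
Proof. by case: scheme => _ [_ [_ [_ []]]]. Qed.
Let Y_of_X u : ch (Y u) (coll (Kset V u) X) = 0.
Proof. by case: scheme => _ [_ [_ [_ [_ []]]]]. Qed.
Let Wsum_of_Y : ch Wsum (coll setT Y) = 0.
Proof. by case: scheme => _ [_ [_ [_ [_ [_ []]]]]]. Qed.
Let server_secure m n :
  cmi (coll setT Y) (coll (S m) W) (jointRV Wsum (collusion (T n))) = 0.
Proof. by case: scheme => _ [_ [_ [_ [_ [_ [_ []]]]]]]. Qed.
Let relay_secure u m n : cmi (coll (Kset V u) X) (coll (S m) W) (collusion (T n)) = 0.
Proof. by case: scheme => _ [_ [_ [_ [_ [_ [_ []]]]]]]. Qed.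

Let q_gt1 : 1 < q. Proof. by rewrite /q ltr1n card_finNzRing_gt1. Qed.

Local Notation entropy_det_eq := (eq_entropy_determined P_prob q_gt1).
Local Notation ch0_pair := (centropy0_pair P_prob q_gt1).
Local Notation ch0_trans := (centropy0_trans P_prob q_gt1).
Local Notation ch0_cond := (centropy0_cond P_prob q_gt1).
Local Notation ch0_coll := (centropy0_coll P_prob q_gt1).
Local Notation ch_det := (centropy_determined P_prob q_gt1).

Lemma ln_card_rV : ln (#|'rV[F]_L|%:R : R) / ln q = L%:R.
Proof.
have lnq_gt0 : 0 < ln q by apply: ln_gt0; exact: q_gt1.
rewrite card_mx mul1n natrX lnXn ?(lt_trans ltr01 q_gt1) //.
by field; rewrite gt_eqF.
Qed.

Lemma entropy_input a : h (W a) = L%:R.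
Proof.
rewrite (entropy_uniform P_prob q_gt1) ?ln_card_rV // => x.
by rewrite W_uniform card_mx mul1n.
Qed.

Lemma entropy_Wsum_le : h Wsum <= L%:R.
Proof. by rewrite -ln_card_rV (entropy_le_ln_card P_prob q_gt1). Qed.

Lemma determined_input_others a : determined_by (W a) (jointRV Wsum (others a)).
Proof.
move=> w w' [eWsum eWo _].
have eW' : \sum_(k | k != a) W k w = \sum_(k | k != a) W k w'.
  by apply: eq_bigr => k ka; apply: (eq_coll_mem eWo); rewrite !inE.
by move: eWsum; rewrite (bigD1 a) //= [in RHS](bigD1 a) //= eW' => /addIr.
Qed.

(* By (i) the inputs and the keys are mutually independent, so [W a] keeps its full
   entropy [L] given the rest. *)
Lemma centropy_input_others a : L%:R <= ch (W a) (others a).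
Proof.
set Wo := coll (~: [set a]) W.
have dothers : determined_by (others a) (jointRV Wo (coll setT Z)).
  exact/determined_pair/determined_sndW/determined_collS/subsetT/determined_fst.
apply: le_trans (le_centropy_cond P_prob q_gt1 (W a) dothers); rewrite /centropy.
rewrite (entropy_det_eq (Y := jointRV (coll setT W) (coll setT Z))); last 2 first.
- apply: determined_pair; first exact/determined_fstW/determined_coll_mem/in_setT.
  apply: determined_pair; last exact: determined_snd.
  exact/determined_fstW/determined_collS/subsetT.
- apply: determined_pair; last by solve_determined.
  apply: determined_trans (determined_coll_setC1 (f := W) (a := a)) _.
  by rewrite /Wo; solve_determined.
have hle := entropy_coll_le P_prob q_gt1 (~: [set a]) W (coll setT Z).
rewrite WZ_indep (bigD1 a) //= entropy_input.
under eq_bigl do rewrite -in_setC1.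
lra.
Qed.

Lemma le_centropy_recover_input a (TG : finType) (G : Omega -> TG) :
  ch (W a) (jointRV G (others a)) = 0 -> L%:R <= ch G (others a).
Proof.
move=> recover; have := cmutinfo_le_centropy P_prob q_gt1 (W a) G (others a).
have := centropy_input_others a; rewrite /cmutinfo recover; lra.
Qed.

Lemma centropy_X_others k a : k != a -> ch (X k) (others a) = 0.
Proof.
move=> ka; have kC : k \in ~: [set a] by rewrite !inE.
apply: ch0_trans (X_of_WZ k) (ch_det _).
exact/determined_pair/determined_sndW/determined_coll_mem/kC/determined_fstW/determined_coll_mem.
Qed.

Lemma centropy_Y_others u a : tag a != u -> ch (Y u) (others a) = 0.
Proof.
move=> au; apply: ch0_trans (Y_of_X u) (ch0_coll _) => k; rewrite inE => /eqP ku.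
by apply: centropy_X_others; apply: contraNneq au => <-; rewrite ku.
Qed.

Lemma input_recovered a (TG : finType) (G : Omega -> TG) :
  (forall u, ch (Y u) (jointRV G (others a)) = 0) -> ch (W a) (jointRV G (others a)) = 0.
Proof.
move=> Y_rec; have Wsum_rec := ch0_trans Wsum_of_Y (ch0_coll (fun u _ => Y_rec u)).
apply: ch0_trans (ch_det _) (ch0_pair Wsum_rec (ch_det (determined_refl _))).
by apply: determined_trans (determined_input_others (a := a)) _; solve_determined.
Qed.

Lemma determined_collusion_others (Tn : {set user V}) a :
  a \notin Tn -> determined_by (collusion Tn) (others a).
Proof.
move=> aT; have sTC : Tn \subset ~: [set a].
  by apply/subsetP => k kT; rewrite !inE; apply: contraNneq aT => <-.
exact/determined_pair/determined_sndW/determined_collS/sTC/determined_fstW/determined_collS.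
Qed.

Lemma centropy_Y_relay_others a u : ch (Y u) (jointRV (X a) (others a)) = 0.
Proof.
have [<-|au] := eqVneq (tag a) u; last first.
  exact: ch0_cond (centropy_Y_others au) (determined_snd _ _).
apply: ch0_trans (Y_of_X (tag a)) (ch0_coll _) => k _.
have [->|ka] := eqVneq k a; first exact/ch_det/determined_fst.
exact: ch0_cond (centropy_X_others ka) (determined_snd _ _).
Qed.

Lemma centropy_Y_server_others a u u' :
  tag a = u -> ch (Y u') (jointRV (Y u) (others a)) = 0.
Proof.
move=> au; have [->|u'u] := eqVneq u' u; first exact/ch_det/determined_fst.
by apply: ch0_cond (centropy_Y_others _) (determined_snd _ _); rewrite au eq_sym.
Qed.

Lemma centropy_relay_messages_ge (A Tn : {set user V}) :
  [disjoint A & Tn] -> #|A|%:R * L%:R <= ch (coll A X) (collusion Tn).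
Proof.
move=> disjAT; apply: (centropy_coll_ge P_prob q_gt1) => a B' aA aB'.
have Wa_rec : ch (W a) (jointRV (X a) (others a)) = 0.
  by apply: input_recovered => u; apply: centropy_Y_relay_others.
apply: le_trans (le_centropy_recover_input Wa_rec) _.
apply: (centropy_le_centropy0 P_prob q_gt1); apply: ch0_pair.
- apply: ch0_coll => k kB'; apply: centropy_X_others.
  by apply: contraNneq aB' => <-.
- exact/ch_det/determined_collusion_others/negbT/(disjointFr disjAT aA).
Qed.

Lemma centropy_server_messages_ge (Us : {set 'I_U}) (Tn : {set user V}) :
  (forall u, u \in Us -> exists2 a, a \notin Tn & tag a = u) ->
  #|Us|%:R * L%:R <= ch (coll Us Y) (collusion Tn).
Proof.
move=> witness; apply: (centropy_coll_ge P_prob q_gt1) => u B' uUs uB'.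
have [a aT au] := witness u uUs.
have Wa_rec : ch (W a) (jointRV (Y u) (others a)) = 0.
  by apply: input_recovered => u'; apply: centropy_Y_server_others.
apply: le_trans (le_centropy_recover_input Wa_rec) _.
apply: (centropy_le_centropy0 P_prob q_gt1); apply: ch0_pair.
- apply: ch0_coll => u' u'B'; apply: centropy_Y_others.
  by rewrite au; apply: contraNneq uB' => ->.
- exact/ch_det/determined_collusion_others.
Qed.

Lemma centropy_keys_relay_ge (B A Tn : {set user V}) :
  A \subset B -> [disjoint A & Tn] ->
  cmi (coll B X) (coll A W) (collusion Tn) = 0 ->
  #|A|%:R * L%:R <= ch (coll A Z) (coll Tn Z).
Proof.
move=> sAB disjAT secure.
have leak0 : cmi (coll A X) (coll A W) (collusion Tn) <= 0.
  by rewrite -secure; apply: (le_cmutinfo_determined P_prob q_gt1); apply: determined_collS.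
have XA_of_ZA : ch (coll A X) (jointRV (coll A Z) (jointRV (coll A W) (collusion Tn))) = 0.
  apply: ch0_coll => k kA; apply: ch0_trans (X_of_WZ k) (ch_det _).
  apply: determined_pair; first exact/determined_sndW/determined_fstW/determined_coll_mem.
  exact/determined_fstW/determined_coll_mem.
have cond : ch (coll A Z) (jointRV (coll A W) (collusion Tn)) <= ch (coll A Z) (coll Tn Z).
  by apply: (le_centropy_cond P_prob q_gt1); solve_determined.
have := centropy_relay_messages_ge disjAT.
have := centropy_le_recover P_prob q_gt1 XA_of_ZA.
by move: leak0; rewrite /cmutinfo; lra.
Qed.

Lemma centropy_Y_of_keys (Us : {set 'I_U}) (A Tn : {set user V}) :
  KUset V Us \subset A :|: Tn ->
  ch (coll Us Y) (jointRV (coll (KUset V Us) Z) (jointRV (coll A W) (collusion Tn))) = 0.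
Proof.
move=> /subsetP sKAT; apply: ch0_coll => u uUs.
apply: ch0_trans (Y_of_X u) (ch0_coll _) => k kKu.
have kKU : k \in KUset V Us by apply/bigcupP; exists u.
apply: ch0_trans (X_of_WZ k) (ch_det _); apply: determined_pair; last first.
  exact/determined_fstW/determined_coll_mem.
apply: determined_sndW; have /setUP[kA|kT] := sKAT k kKU.
- exact/determined_fstW/determined_coll_mem.
- exact/determined_sndW/determined_fstW/determined_coll_mem.
Qed.

Lemma centropy_keys_server_ge (Us : {set 'I_U}) (A Tn : {set user V}) :
  (forall u, u \in Us -> exists2 a, a \notin Tn & tag a = u) ->
  KUset V Us \subset A :|: Tn ->
  cmi (coll setT Y) (coll A W) (jointRV Wsum (collusion Tn)) = 0 ->
  #|Us|%:R * L%:R - cmi Wsum (coll A W) (collusion Tn)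
    <= ch (coll (KUset V Us) Z) (coll Tn Z).
Proof.
move=> witness sKAT secure.
have leak : cmi (coll Us Y) (coll A W) (collusion Tn) <= cmi Wsum (coll A W) (collusion Tn).
  apply: le_trans (cmutinfo_chain_le P_prob q_gt1 Wsum _ _ _) _.
  rewrite -[leRHS]addr0 lerD2l -secure.
  by apply: (le_cmutinfo_determined P_prob q_gt1); apply/determined_collS/subsetT.
have cond : ch (coll (KUset V Us) Z) (jointRV (coll A W) (collusion Tn))
    <= ch (coll (KUset V Us) Z) (coll Tn Z).
  by apply: (le_centropy_cond P_prob q_gt1); solve_determined.
have := centropy_server_messages_ge witness.
have := centropy_le_recover P_prob q_gt1 (centropy_Y_of_keys sKAT).
by move: leak; rewrite /cmutinfo; lra.
Qed.

Lemma cmutinfo_Wsum_le (A Tn : {set user V}) : cmi Wsum (coll A W) (collusion Tn) <= L%:R.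
Proof.
have := centropy_le_entropy P_prob q_gt1 Wsum (collusion Tn).
have := centropy_ge0 P_prob q_gt1 Wsum (jointRV (coll A W) (collusion Tn)).
by have := entropy_Wsum_le; rewrite /cmutinfo; lra.
Qed.

(* An input outside [A :|: Tn] masks [Wsum] from everything [coll A W] and the
   colluders see, so revealing [coll A W] leaks nothing about [Wsum]. *)
Lemma cmutinfo_Wsum_le0 (A Tn : {set user V}) k :
  k \notin A :|: Tn -> cmi Wsum (coll A W) (collusion Tn) <= 0.
Proof.
rewrite inE negb_or => /andP[kA kT].
have sAC : A \subset ~: [set k].
  by apply/subsetP => i iA; rewrite !inE; apply: contraNneq kA => <-.
have Wsum_others : L%:R <= ch Wsum (others k).
  exact/le_centropy_recover_input/ch_det/determined_input_others.
have cond : ch Wsum (others k) <= ch Wsum (jointRV (coll A W) (collusion Tn)).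
  apply: (le_centropy_cond P_prob q_gt1); apply: determined_pair; last exact: determined_collusion_others.
  exact/determined_fstW/determined_collS.
have := centropy_le_entropy P_prob q_gt1 Wsum (collusion Tn).
by have := entropy_Wsum_le; rewrite /cmutinfo; lra.
Qed.

Hypothesis S_closed : subset_closed S.

Lemma centropy_keys_Sm_Ku (u : 'I_U) m n : S m :&: T n = set0 ->
  #|S m :&: Kset V u|%:R * L%:R <= ch (coll (S m :&: Kset V u) Z) (coll (T n) Z).
Proof.
move=> disjST; have [m' Sm'] := S_closed (subsetIl (S m) (Kset V u)).
apply: (centropy_keys_relay_ge (subsetIr _ _)).
  by apply: disjointWl (subsetIl _ _) _; rewrite -setI_eq0 disjST.
by rewrite -Sm'; apply: relay_secure.
Qed.

Lemma centropy_keys_Uset m n (Us := Uset (S m) (T n)) : S m :&: T n = set0 ->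
  if #|KUset V Us :|: T n| == #|user V|
  then (#|Us|%:R - 1) * L%:R <= ch (coll (KUset V Us) Z) (coll (T n) Z)
  else #|Us|%:R * L%:R <= ch (coll (KUset V Us) Z) (coll (T n) Z).
Proof.
move=> disjST; set KU := KUset V Us.
have [m' Sm'] := S_closed (subsetIl (S m) KU).
have secure :
    cmi (coll setT Y) (coll (S m :&: KU) W) (jointRV Wsum (collusion (T n))) = 0.
  by rewrite -Sm'; apply: server_secure.
have := centropy_keys_server_ge (Uset_witness disjST) (KUset_Uset_sub _ _) secure.
case: ifP => [_|partial].
  by have := cmutinfo_Wsum_le (S m :&: KU) (T n); rewrite mulrBl mul1r; lra.
have [k kKT] : exists k, k \notin KU :|: T n.
  apply/existsP; apply: contraFT partial => /existsPn full.
  suff -> : KU :|: T n = setT by rewrite cardsT.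
  by apply/setP => k; rewrite in_setT; apply/negbNE/full.
have kST : k \notin (S m :&: KU) :|: T n.
  by apply: contra kKT => /setUP[/setIP[_ kKU]|kT]; rewrite inE ?kKU ?kT ?orbT.
by have := cmutinfo_Wsum_le0 kST; lra.
Qed.
End Bounds.

Unset Implicit Arguments.
Set Strict Implicit.

Theorem lemma3 (R : realType) (Omega : finType) (P : Omega -> R)
  (F : finFieldType) (L U : nat) (V : 'I_U -> nat)
  (M N : nat) (S : 'I_M -> {set user V}) (T : 'I_N -> {set user V})
  (TZS TZ TX TY : finType)
  (W : user V -> Omega -> 'rV[F]_L) (ZS : Omega -> TZS)
  (Z : user V -> Omega -> TZ) (X : user V -> Omega -> TX)
  (Y : 'I_U -> Omega -> TY) :
  (2 <= U)%N ->
  (forall u, 0 < V u)%N ->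
  subset_closed S -> subset_closed T ->
  WS_HSA P S T W ZS Z X Y ->
  forall (u : 'I_U) (m : 'I_M) (n : 'I_N),
    S m :&: T n = set0 ->
    (#|(S m :&: Kset V u) :|: T n| <= #|user V| - 1)%N ->
    let q : R := #|F|%:R in
    let Us := Uset (S m) (T n) in
    (centropy q P (coll (S m :&: Kset V u) Z) (coll (T n) Z)
       >= #|S m :&: Kset V u|%:R * L%:R)
    /\
    (if #|KUset V Us :|: T n| == #|user V|
     then centropy q P (coll (KUset V Us) Z) (coll (T n) Z)
            >= (#|Us|%:R - 1) * L%:R
     else centropy q P (coll (KUset V Us) Z) (coll (T n) Z)
            >= #|Us|%:R * L%:R).
Proof.
(* The bounds hold without the assumptions on [U], [V], the family [T] and the size of
   [(S m :&: Kset V u) :|: T n]. *)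
move=> _ _ S_closed _ scheme u m n disjST _.
exact: conj (centropy_keys_Sm_Ku scheme S_closed u disjST)
  (centropy_keys_Uset scheme S_closed disjST).
Qed.
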